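(* (Euler's Formula for Resistance Function I.) Let $\Gamma$ be a metrized graph whose edges are $e_1,\dots,e_m$, where $e_i$ has end points $p_i,q_i$ and length $L_i$. For $s,t\in V(\Gamma)$ let $B=\{e_i\in E(\Gamma): s \text{ and } t \text{ are disconnected in } \Gamma-e_i\}$. Then $$r(s,t)=\sum_{e_i\in B}L_i+\sum_{\substack{e_i\in E(\Gamma)\\ e_i \text{ not a bridge}}}\frac{L_i}{(L_i+R_i)^2}\big(j^{\Gamma-e_i}_{p_i}(q_i,s)-j^{\Gamma-e_i}_{p_i}(q_i,t)\big)^2=\sum_{e_i\in B}L_i+\sum_{\substack{e_i\in E(\Gamma)\\ e_i \text{ not a bridge}}}\frac{1}{L_i}\big(j_{p_i}(q_i,s)-j_{p_i}(q_i,t)\big)^2.$$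
   Context: A metrized graph $\Gamma$ is a finite connected graph (multiple edges and self-loops allowed) in which each edge is identified with a closed line segment of positive length; $V(\Gamma)$ is a chosen finite vertex set and $E(\Gamma)$ the resulting edge set. $\Gamma$ is regarded as a resistive electric circuit in which each edge is a resistor whose resistance equals its length. $r(x,y)$ is the effective resistance between $x$ and $y$; $j_z(x,y)$ is the voltage at $x$ when a unit current enters at $y$ and exits at $z$, with reference voltage $0$ at $z$. $\Gamma-e_i$ is obtained by deleting the interior of $e_i$; $e_i$ is a bridge if $\Gamma-e_i$ is disconnected; for non-bridge $e_i$, $R_i:=r_{\Gamma-e_i}(p_i,q_i)$, and $j^{\Gamma-e_i}$ is the voltage function of $\Gamma-e_i$. *)

(* A metrized graph is modelled by its underlying finite
   multigraph (vertex finType V, edge finType E, endpoints p q : E -> V,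
   lengths L : E -> R, all positive), viewed as a resistive circuit in which
   edge e is a resistor of resistance L e. *)
From HB Require Import structures.
From mathcomp Require Import all_boot all_order all_algebra.
From Stdlib Require Import ClassicalEpsilon.
Set Implicit Arguments. Unset Strict Implicit. Unset Printing Implicit Defensive.
Import Order.TTheory GRing.Theory Num.Theory.
Local Open Scope ring_scope.

Section Circuit.
Variables (R : realFieldType) (V E : finType) (p q : E -> V) (L : E -> R).

Definition adj (keep : pred E) : rel V := fun x y =>
  [exists e, keep e && (((p e == x) && (q e == y)) || ((p e == y) && (q e == x)))].

Definition graph_connected (keep : pred E) : bool :=
  [forall x, forall y, connect (adj keep) x y].

Definition lap (keep : pred E) (f : V -> R) (v : V) : R :=
  \sum_(e | keep e && (p e == v)) (f v - f (q e)) / L e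
  + \sum_(e | keep e && (q e == v)) (f v - f (p e)) / L e.

(* f is the potential when a unit current enters at y and exits at z,
   with reference potential 0 at z *)
Definition is_voltage (keep : pred E) (z y : V) (f : V -> R) : Prop :=
  f z = 0 /\ forall v, lap keep f v = (v == y)%:R - (v == z)%:R.

(* j_z(x,y) in the subgraph with edge set [keep] *)
Definition volt (keep : pred E) (z x y : V) : R :=
  epsilon (inhabits (fun _ : V => 0 : R)) (is_voltage keep z y) x.

Definition res (keep : pred E) (x y : V) : R := volt keep y x x.

End Circuit.

(* The effective resistance r(s,t) is the energy sum_e (current through e)^2 L_e
   of the unit s-t current (discrete Green identity), so it suffices to compute
   the current through each edge e.  If e is a bridge, the flux of the current
   out of the component of p_e in Gamma - e shows that it carries the whole unit
   current when it separates s from t and nothing otherwise.  If e is not a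
   bridge, the voltage of Gamma is the voltage of Gamma - e corrected by a
   multiple of j^{Gamma-e}_{q_e}(., p_e), the potential of a current sent
   through the deleted edge; matching the current through e scales the drop
   across e by L_e / (L_e + R_e).  Reciprocity j_a(b,s) - j_a(b,t) =
   j_t(b,s) - j_t(a,s) then rewrites the drops in the stated forms. *)
From HB Require Import structures.
From mathcomp Require Import all_boot all_order all_algebra.
From mathcomp Require Import ring.
From Stdlib Require Import ClassicalEpsilon.
Set Implicit Arguments. Unset Strict Implicit. Unset Printing Implicit Defensive.
Import Order.TTheory GRing.Theory Num.Theory.
Local Open Scope ring_scope.

Lemma sum_mul_delta (R : pzSemiRingType) (T : finType) (g : T -> R) (y : T) :
  \sum_x g x * (x == y)%:R = g y.
Proof.
rewrite (bigD1 y) //= eqxx mulr1 big1 ?addr0 // => x /negPf ->.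
by rewrite mulr0.
Qed.

Lemma sum_delta (R : pzSemiRingType) (T : finType) (y : T) :
  \sum_x ((x == y)%:R : R) = 1.
Proof.
by rewrite -[RHS](sum_mul_delta (fun=> 1) y); apply: eq_bigr => x _; rewrite mul1r.
Qed.

Lemma kernel_inj_surj (F : fieldType) (T : finType) (K : T -> T -> F) :
  (forall f : T -> F, (forall y, \sum_x f x * K x y = 0) -> forall x, f x = 0) ->
  forall b : T -> F, exists f : T -> F, forall y, \sum_x f x * K x y = b y.
Proof.
move=> Kinj b.
pose M : 'M[F]_#|T| := \matrix_(i, j) K (enum_val i) (enum_val j).
pose fun_of (u : 'rV[F]_#|T|) x := u 0 (enum_rank x).
have mulME u y : (u *m M) 0 (enum_rank y) = \sum_x fun_of u x * K x y.
  rewrite mxE (reindex enum_rank) /=; last first.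
    by exists enum_val => x _; rewrite ?enum_rankK ?enum_valK.
  by apply: eq_bigr => x _; rewrite mxE !enum_rankK.
have M_free : row_free M.
  apply: inj_row_free => u uM0; apply/rowP => i; rewrite mxE -[i]enum_valK.
  by apply: (Kinj (fun_of u)) => y; rewrite -mulME uM0 mxE.
exists (fun_of (\row_i b (enum_val i) *m invmx M)) => y.
by rewrite -mulME -mulmxA mulVmx ?mulmx1 ?mxE ?enum_rankK // -row_free_unit.
Qed.

Section Circuit.
Variables (R : realFieldType) (V E : finType) (p q : E -> V) (L : E -> R).
Hypothesis Lpos : forall e, 0 < L e.

Local Notation adj := (adj p q).
Local Notation connected := (graph_connected p q).
Local Notation lap := (lap p q L).
Local Notation is_voltage := (is_voltage p q L).
Local Notation volt := (volt p q L).
Local Notation res := (res p q L).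

Lemma adj_sym keep : symmetric (adj keep).
Proof.
move=> x y; apply/existsP/existsP => -[e /andP[ke H]]; exists e.
  by rewrite ke orbC.
by rewrite ke orbC.
Qed.

Lemma connect_adj_sym keep : connect_sym (adj keep).
Proof. exact/sym_connect_sym/adj_sym. Qed.

Lemma connected_connect keep x y : connected keep -> connect (adj keep) x y.
Proof. by move=> /forallP /(_ x) /forallP /(_ y). Qed.

Lemma sum_incident keep (H : E -> V -> R) (a : E -> V) :
  \sum_v \sum_(e | keep e && (a e == v)) H e v = \sum_(e | keep e) H e (a e).
Proof.
rewrite (exchange_big_dep keep) /=; last by move=> v e _ /andP[].
apply: eq_bigr => e ke; rewrite (big_pred1 (a e)) // => v.
by rewrite /= ke eq_sym.
Qed.

Lemma sum_mul_lap keep (f g : V -> R) :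
  \sum_v g v * lap keep f v =
  \sum_(e | keep e) (g (p e) - g (q e)) * (f (p e) - f (q e)) / L e.
Proof.
under eq_bigr do rewrite /lap mulrDr !mulr_sumr.
rewrite big_split /= !sum_incident -big_split /=.
by apply: eq_bigr => e _; rewrite !mulrA -mulrDl; congr (_ / _); ring.
Qed.

Lemma sum_lap keep f : \sum_v lap keep f v = 0.
Proof.
rewrite -[LHS](eq_bigr _ (fun v _ => mul1r (lap keep f v))) sum_mul_lap.
by rewrite big1 // => e _; rewrite subrr !mul0r.
Qed.

Lemma lap_ext keep f g v : f =1 g -> lap keep f v = lap keep g v.
Proof.
by move=> fg; rewrite /lap; congr (_ + _); apply: eq_bigr => e _; rewrite !fg.
Qed.

Lemma lap_affine keep (a b c : R) f g v :
  lap keep (fun x => a * f x + b * g x + c) v =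
  a * lap keep f v + b * lap keep g v.
Proof.
rewrite /lap !mulrDr !mulr_sumr addrACA -!big_split /=.
by congr (_ + _); apply: eq_bigr => e _; rewrite !mulrA -mulrDl; congr (_ / _); ring.
Qed.

Lemma lap_kernel keep f v :
  lap keep f v = \sum_x f x * lap keep (fun y => (y == x)%:R) v.
Proof.
rewrite (lap_ext _ _ (fun y => esym (sum_mul_delta (fun x => f x) y))).
rewrite /lap; under [RHS]eq_bigr do rewrite mulrDr !mulr_sumr.
rewrite big_split /= exchange_big [X in _ = _ + X]exchange_big /=.
by congr (_ + _); apply: eq_bigr => e _; rewrite -sumrB mulr_suml;
  apply: eq_bigr => x _; rewrite -mulrBr mulrA !(eq_sym x).
Qed.

(* Zero Dirichlet energy forces f to agree across every kept edge. *)
Lemma harmonic_const keep f : connected keep ->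
  (forall v, lap keep f v = 0) -> forall x y, f x = f y.
Proof.
move=> cn f_harm x y.
have energy0 :
    \sum_(e | keep e) (f (p e) - f (q e)) * (f (p e) - f (q e)) / L e = 0.
  by rewrite -sum_mul_lap big1 // => v _; rewrite f_harm mulr0.
have edge_eq e : keep e -> f (p e) = f (q e).
  have term_ge0 e' : keep e' ->
      0 <= (f (p e') - f (q e')) * (f (p e') - f (q e')) / L e'.
    by move=> _; rewrite -expr2 divr_ge0 ?sqr_ge0 // ltW.
  move=> /(psumr_eq0P term_ge0 energy0) /eqP.
  by rewrite mulf_eq0 invr_eq0 (gt_eqF (Lpos e)) orbF mulf_eq0 orbb subr_eq0 => /eqP.
have f_closed : closed (adj keep) [pred z | f z == f y].
  move=> a b /existsP[e /andP[ke /orP[]]] /andP[/eqP<- /eqP<-];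
    by rewrite !inE edge_eq.
by have /eqP := closed_connect f_closed (connected_connect x y cn); rewrite !inE eqxx.
Qed.

(* Ground at z: f |-> lap f + f z is injective, and when the right-hand side
   has total flux 0 its solution vanishes at z. *)
Lemma volt_exists keep z y : connected keep -> exists f, is_voltage keep z y f.
Proof.
move=> cn.
pose K x v := lap keep (fun w => (w == x)%:R) v + (x == z)%:R.
have KE f v : \sum_x f x * K x v = lap keep f v + f z.
  under eq_bigr do rewrite mulrDr.
  by rewrite big_split /= -lap_kernel sum_mul_delta.
have grounded f b : (forall v, lap keep f v + f z = b v) ->
    \sum_v b v = 0 -> f z = 0.
  have V_gt0 : (0 < #|V|)%N by apply/card_gt0P; exists z.
  move=> fb; rewrite -(eq_bigr _ (fun v _ => fb v)) big_split /= sum_lap add0r.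
  by rewrite sumr_const => /eqP; rewrite mulrn_eq0 eqn0Ngt V_gt0 => /eqP.
pose b v : R := (v == y)%:R - (v == z)%:R.
have [|f Hf] := kernel_inj_surj (K := K) _ b.
  move=> f Hf0 x; have fz0 : f z = 0.
    by apply: (grounded f (fun=> 0)) => [v|]; rewrite -?KE ?Hf0 ?big1.
  rewrite -fz0; apply: (harmonic_const cn) => v.
  by rewrite -(addr0 (lap _ _ _)) -fz0 -KE Hf0.
have fz0 : f z = 0.
  by apply: (grounded f b) => [v|]; rewrite -?KE ?Hf // sumrB !sum_delta subrr.
by exists f; split=> // v; rewrite -[LHS]addr0 -fz0 -KE Hf.
Qed.

Lemma volt_unique keep z y f g : connected keep ->
  is_voltage keep z y f -> is_voltage keep z y g -> f =1 g.
Proof.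
move=> cn [fz lf] [gz lg] x; apply/eqP; rewrite -subr_eq0; apply/eqP.
have diff_harm v : lap keep (fun x => 1 * f x + (-1) * g x + 0) v = 0.
  by rewrite lap_affine lf lg; ring.
by have := harmonic_const cn diff_harm x z; rewrite fz gz !mulr0 !addr0 mul1r mulN1r.
Qed.

Lemma volt_spec keep z y : connected keep ->
  is_voltage keep z y (fun x => volt keep z x y).
Proof. by move=> cn; apply: (epsilon_spec _ _ (volt_exists z y cn)). Qed.

Lemma volt_eq keep z y f : connected keep ->
  is_voltage keep z y f -> forall x, volt keep z x y = f x.
Proof. by move=> cn; apply: volt_unique cn (volt_spec z y cn). Qed.

Lemma res_energy keep s t : connected keep ->
  res keep s t =
  \sum_(e | keep e) (volt keep t (p e) s - volt keep t (q e) s) ^+ 2 / L e.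
Proof.
move=> cn; have [vt vl] := volt_spec t s cn.
transitivity (volt keep t s s - volt keep t t s); first by rewrite vt subr0.
under [RHS]eq_bigr do rewrite expr2.
rewrite -sum_mul_lap; under eq_bigr do rewrite vl mulrBr.
by rewrite sumrB !sum_mul_delta.
Qed.

Lemma res_ge0 keep s t : connected keep -> 0 <= res keep s t.
Proof.
move=> cn; rewrite res_energy //; apply: sumr_ge0 => e _.
by rewrite divr_ge0 ?sqr_ge0 // ltW.
Qed.

(* Both sides are potential differences of the unit s-t current. *)
Lemma volt_reciprocity keep a b s t : connected keep ->
  volt keep a b s - volt keep a b t = volt keep t b s - volt keep t a s.
Proof.
move=> cn; have [as0 a_lap] := volt_spec a s cn; have [at0 at_lap] := volt_spec a t cn.
pose k := volt keep a t t - volt keep a t s.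
have st_volt : is_voltage keep t s
    (fun x => 1 * volt keep a x s + (-1) * volt keep a x t + k).
  split=> [|v]; first by rewrite /k; ring.
  by rewrite lap_affine a_lap at_lap; ring.
by rewrite !(volt_eq cn st_volt) as0 at0 /k; ring.
Qed.

Section DeletedEdge.
Hypothesis conn : connected predT.
Variable e : E.

Local Notation adj' := (adj (predC1 e)).

Lemma adjT_cases x y : adj predT x y ->
  adj' x y \/ ((x == p e) && (y == q e) || (x == q e) && (y == p e)).
Proof.
move=> /existsP[e' /andP[_ H]]; have [<-|ne] := eqVneq e' e; last first.
  by left; apply/existsP; exists e'; rewrite /= ne.
by right; case/orP: H => /andP[/eqP-> /eqP->]; rewrite !eqxx ?orbT.
Qed.

Lemma adj_predC1_edge e' : e' != e -> adj' (p e') (q e').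
Proof. by move=> ne; apply/existsP; exists e'; rewrite /= ne !eqxx. Qed.

Lemma connect_predC1_ends x : connect adj' (p e) x || connect adj' (q e) x.
Proof.
pose C := [pred z | connect adj' (p e) z || connect adj' (q e) z].
have C_closed : closed (adj predT) C.
  move=> y z /adjT_cases[yz|]; last first.
    by case/orP=> /andP[/eqP-> /eqP->]; rewrite !inE !connect0 ?orbT.
  have cl x0 := connect_closed (connect_adj_sym (predC1 e)) x0 yz.
  by move: (cl (p e)) (cl (q e)); rewrite !inE => -> ->.
have := closed_connect C_closed (connected_connect (p e) x conn).
by rewrite !inE connect0.
Qed.

Lemma bridge_ends_disconnected :
  ~~ connected (predC1 e) -> ~~ connect adj' (p e) (q e).
Proof.
apply: contra => pq; apply/forallP => x; apply/forallP => y.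
apply: connect_sub (connected_connect x y conn) => u w /adjT_cases[uw|].
  exact: connect1.
by case/orP=> /andP[/eqP-> /eqP->]; rewrite // connect_adj_sym.
Qed.

Lemma lapT_predC1 f v :
  lap predT f v = lap (predC1 e) f v
                  + ((p e == v)%:R - (q e == v)%:R) * (f (p e) - f (q e)) / L e.
Proof.
rewrite /lap /= [in RHS]big_mkcondr [in RHS]big_mkcondr /=.
rewrite [in LHS]big_mkcond [in LHS](bigD1 e) //= [X in _ + X = _]big_mkcond.
rewrite [X in _ + X = _](bigD1 e) //= -!mulrA.
set A := \sum_(i | i != e) _; set B := \sum_(i | i != e) _.
by case: eqP => [<-|_]; case: eqP => [->|_]; rewrite ?eqxx /=; ring.
Qed.

Lemma connect_predC1_separates s t :
  ~~ connect adj' s t = (connect adj' (p e) s != connect adj' (p e) t).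
Proof.
have sym := connect_adj_sym (predC1 e).
have := connect_predC1_ends s; have := connect_predC1_ends t.
case ps: (connect adj' (p e) s); case pt: (connect adj' (p e) t) => /= qt qs.
- by apply/negbF/(connect_trans _ pt); rewrite sym.
- by apply/negP => st; move: pt; rewrite (connect_trans ps st).
- by apply/negP => st; move: ps; rewrite (connect_trans pt) // sym.
- by apply/negbF/(connect_trans _ qt); rewrite sym.
Qed.

(* Green's identity against the indicator of the component of p e in
   Gamma - e: only the edge e leaves that component. *)
Lemma bridge_drop s t : ~~ connected (predC1 e) ->
  volt predT t (p e) s - volt predT t (q e) s =
  ((connect adj' (p e) s)%:R - (connect adj' (p e) t)%:R) * L e.
Proof.
move=> bridge; pose g x : R := (connect adj' (p e) x)%:R.
have [_ f_lap] := volt_spec t s conn.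
have := sum_mul_lap predT (fun x => volt predT t x s) g.
under eq_bigr do rewrite f_lap mulrBr.
rewrite sumrB !sum_mul_delta (bigD1 e) //= big1 ?addr0; last first.
  move=> e' /adj_predC1_edge /(connect_closed (connect_adj_sym _) (p e)).
  by rewrite /g !inE => ->; rewrite subrr !mul0r.
rewrite /g connect0 (negPf (bridge_ends_disconnected bridge)) subr0 mul1r => ->.
by rewrite divfK // gt_eqF.
Qed.

Lemma bridge_energy s t : ~~ connected (predC1 e) ->
  (volt predT t (p e) s - volt predT t (q e) s) ^+ 2 / L e =
  if ~~ connect adj' s t then L e else 0.
Proof.
move=> bridge; rewrite bridge_drop // connect_predC1_separates.
by case: (connect adj' (p e) s); case: (connect adj' (p e) t) => /=;
  field; rewrite gt_eqF.
Qed.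

Lemma L_add_res_neq0 : connected (predC1 e) ->
  L e + res (predC1 e) (p e) (q e) != 0.
Proof. by move=> cn'; rewrite gt_eqF // ltr_wpDr ?res_ge0. Qed.

(* Inserting e into Gamma - e: correct the voltage by c times the potential of
   a unit current from p e to q e in Gamma - e, with c the current through e. *)
Lemma nonbridge_drop s t : connected (predC1 e) ->
  volt predT t (p e) s - volt predT t (q e) s =
  L e / (L e + res (predC1 e) (p e) (q e))
  * (volt (predC1 e) t (p e) s - volt (predC1 e) t (q e) s).
Proof.
move=> cn'; pose f' x := volt (predC1 e) t x s.
pose r x := volt (predC1 e) (q e) x (p e).
have [_ f'_lap] := volt_spec t s cn'; have [rq r_lap] := volt_spec (q e) (p e) cn'.
have LR : L e + r (p e) != 0 := L_add_res_neq0 cn'.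
rewrite -[res _ _ _]/(r (p e)) -[volt (predC1 e) t (p e) s]/(f' (p e)).
rewrite -[volt (predC1 e) t (q e) s]/(f' (q e)).
pose c := (f' (p e) - f' (q e)) / (L e + r (p e)).
pose k := c * r t - f' t.
have full_volt : is_voltage predT t s (fun x => 1 * f' x + (- c) * r x + k).
  split=> [|v]; first by rewrite /k; ring.
  rewrite lapT_predC1 lap_affine f'_lap r_lap (rq : r (q e) = 0) /c ![_ == v]eq_sym.
  move: (_ == s)%:R (_ == t)%:R (_ == p e)%:R (_ == q e)%:R => a1 a2 a3 a4.
  by field; rewrite LR gt_eqF.
rewrite !(volt_eq conn full_volt) (rq : r (q e) = 0) /k /c.
by field.
Qed.

Lemma nonbridge_energy s t : connected (predC1 e) ->
  (volt predT t (p e) s - volt predT t (q e) s) ^+ 2 / L e =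
  L e / (L e + res (predC1 e) (p e) (q e)) ^+ 2
  * (volt (predC1 e) (p e) (q e) s - volt (predC1 e) (p e) (q e) t) ^+ 2.
Proof.
move=> cn'; have LR := L_add_res_neq0 cn'.
rewrite nonbridge_drop // volt_reciprocity // -[volt _ t (q e) s - _]opprB sqrrN.
by field; rewrite LR gt_eqF.
Qed.

End DeletedEdge.

End Circuit.

Theorem theorem3p7 (R : realFieldType) (V E : finType) (p q : E -> V)
    (L : E -> R) (Lpos : forall e, 0 < L e)
    (conn : graph_connected p q predT) (s t : V) :
  let B := [pred e | ~~ connect (adj p q (predC1 e)) s t] in
  let nonbridge := [pred e | graph_connected p q (predC1 e)] in
  let Ri := fun e => res p q L (predC1 e) (p e) (q e) in
  res p q L predT s t =
    \sum_(e | B e) L e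
    + \sum_(e | nonbridge e)
        L e / (L e + Ri e) ^+ 2
        * (volt p q L (predC1 e) (p e) (q e) s
           - volt p q L (predC1 e) (p e) (q e) t) ^+ 2
  /\
  res p q L predT s t =
    \sum_(e | B e) L e
    + \sum_(e | nonbridge e)
        (volt p q L predT (p e) (q e) s - volt p q L predT (p e) (q e) t) ^+ 2
        / L e.
Proof.
move=> B nonbridge Ri.
split; rewrite (res_energy Lpos) // (big_mkcond B) (big_mkcond nonbridge);
  rewrite -big_split /=; apply: eq_bigr => e _;
  have [cn'|bridge] := boolP (graph_connected p q (predC1 e)).
- by rewrite (connected_connect s t cn') add0r (nonbridge_energy Lpos conn).
- by rewrite addr0 (bridge_energy Lpos conn).
- rewrite (connected_connect s t cn') add0r (volt_reciprocity Lpos _ _ _ _ conn).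
  by rewrite -[volt _ _ _ _ t (q e) s - _]opprB sqrrN.
- by rewrite addr0 (bridge_energy Lpos conn).
Qed.
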